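(* Let $G$ be a finite simple graph and let $1\le k<\nu(G)$. If $I(G)^{[k]}$ is linearly related, then $I(G)^{[k+1]}$ is linearly related.
   Context: $G$ is a finite simple graph on vertex set $\{x_1,\ldots,x_n\}$ identified with the variables of $S=K[x_1,\ldots,x_n]$ ($K$ a field); edges are identified with degree-2 monomials. $I(G)^{[k]}$ (the $k$th squarefree power of the edge ideal) is generated by all products $e_1\cdots e_k$ over $k$-matchings $\{e_1,\ldots,e_k\}$ of $G$; it is generated in degree $2k$. $\nu(G)$ is the matching number. A graded ideal $I$ generated in a single degree $d$ is linearly related if its first syzygy module is generated by linear relations, i.e. $\dim_K\operatorname{Tor}_1^S(I,K)_j=0$ for all $j\neq d+1$. *)

From HB Require Import structures.
From mathcomp Require Import all_boot all_order all_algebra.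
Set Implicit Arguments. Unset Strict Implicit. Unset Printing Implicit Defensive.
Import Order.TTheory GRing.Theory Num.Theory.

(* A finite simple graph on the finite vertex type V is a symmetric,
   irreflexive relation E.  Vertices are identified with the variables of
   S = K[x_v : v in V]. *)
Definition simple_graph (V : finType) (E : rel V) : Prop :=
  symmetric E /\ irreflexive E.

Section Graph.
Variables (V : finType) (E : rel V).

Definition is_edge (e : {set V}) : bool :=
  [exists x, exists y, E x y && (e == [set x; y])].

Definition is_matching (M : {set {set V}}) : bool :=
  [forall e in M, is_edge e] && trivIset M.

Definition matching_number : nat :=
  \max_(M : {set {set V}} | is_matching M) #|M|.

(* The (squarefree) monomial e_1 ... e_k of a k-matching {e_1,..,e_k} is
   x_{cover M}; [sqf_gens k] is the set of supports of the minimal monomial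
   generators of I(G)^[k]. *)
Definition sqf_gens (k : nat) : {set {set V}} :=
  [set S : {set V} | [exists M : {set {set V}},
      [&& is_matching M, #|M| == k & cover M == S]]].
End Graph.

Section Tor1.
Variables (K : fieldType) (V : finType).

(* multidegrees a in N^V ; the squarefree monomial x_S divides x^a *)
Definition sdivides (S : {set V}) (a : V -> nat) : bool :=
  [forall v in S, 0 < a v]%N.

Definition mdec (a : V -> nat) (i : V) : V -> nat :=
  fun v => if v == i then (a v).-1 else a v.

(* Let I be generated by the distinct squarefree monomials x_S, S in gens,
   F = (+)_S S(-|S|) e_S -> I the (minimal) presentation e_S |-> x_S.
   The multidegree-a component of the syzygy module Syz = ker(F -> I) is
   the set of coefficient vectors c (c_S = coefficient of x^a/x_S e_S)
   supported on the generators dividing x^a, with sum 0. *)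
Definition syz_comp (gens : {set {set V}}) (a : V -> nat) (c : {set V} -> K)
  : Prop :=
  (forall S, (c S != 0)%R -> (S \in gens) && sdivides S a) /\
  (\sum_(S : {set V}) c S = 0)%R.

(* Tor_1^S(I,K)_a = Syz_a / (m Syz)_a vanishes iff Syz_a is the sum of the
   images x_i Syz_{a - e_i} (i with a_i > 0); multiplication by x_i is the
   identity on coefficient vectors. *)
Definition tor1_vanishes (gens : {set {set V}}) (a : V -> nat) : Prop :=
  forall c, syz_comp gens a c ->
  exists cs : V -> {set V} -> K,
    (forall i, syz_comp gens (mdec a i) (cs i) /\
               (a i = 0%N -> forall S, cs i S = 0%R)) /\
    (forall S, c S = (\sum_(i : V) cs i S)%R).

(* An ideal generated in degree d is linearly related iff
   dim_K Tor_1(I,K)_j = 0 for all j <> d+1, i.e. Tor_1(I,K)_a = 0 for all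
   multidegrees a with |a| <> d+1. *)
Definition linearly_related_gens (gens : {set {set V}}) (d : nat) : Prop :=
  forall a : V -> nat, (\sum_(v : V) a v)%N <> d.+1 -> tor1_vanishes gens a.

Definition sqf_power_linearly_related (E : rel V) (k : nat) : Prop :=
  linearly_related_gens (sqf_gens E k) (2 * k).
End Tor1.

From mathcomp Require Import all_boot all_order all_algebra.
Set Implicit Arguments. Unset Strict Implicit. Unset Printing Implicit Defensive.
Import GRing.Theory.

(* In every multidegree a, the syzygies of the ideal generated by the
   squarefree monomials x_S (S in gens) are spanned by the differences
   e_X - e_Y of generators dividing x^a.  Outside squarefree degrees every
   syzygy comes from a lower degree; in the squarefree degree x_T, the syzygy
   e_X - e_Y comes from a lower degree as soon as X :|: Y <> T.  So the ideal is
   linearly related iff, for every T with #|T| <> d + 1, the generators inside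
   T are connected by the relation X :|: Y <> T.
   For I(G)^[k+1] and two generators A <> B inside T, coming from matchings
   MA and MB, trade an edge f of MB through a vertex of B :\: A for the edge
   of MA that f meets.  The resulting matching N shares an edge of MA with A
   (here k >= 1 is used) and the edge f with B.  Two matchings sharing an
   edge e are connected because, after removing e, the connectivity of
   I(G)^[k] inside T :\: e applies, as #|T :\: e| = #|T| - 2 <> 2k + 1. *)

Section Syzygies.
Variables (K : fieldType) (V : finType) (gens : {set {set V}}).
Implicit Types (S T X Y : {set V}) (a : V -> nat) (c : {set V} -> K).
Local Open Scope ring_scope.

(* X and Y are adjacent when lcm(x_X, x_Y) properly divides x_T. *)
Definition link (T : {set V}) : rel {set V} :=
  fun X Y => [&& X \in gens, X \subset T, Y \in gens, Y \subset T & X :|: Y != T].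

Definition link_connected (T : {set V}) : Prop :=
  forall X Y, X \in gens -> Y \in gens -> X \subset T -> Y \subset T ->
  connect (link T) X Y.

(* [tor1_vanishes K gens a] unfolds to: every syzygy of degree a is decomposable. *)
Definition decomposable (a : V -> nat) (c : {set V} -> K) : Prop :=
  exists cs : V -> {set V} -> K,
    (forall i, syz_comp gens (mdec a i) (cs i) /\
               (a i = 0%N -> forall S, cs i S = 0)) /\
    (forall S, c S = \sum_(i : V) cs i S).

Definition sqf_deg (T : {set V}) : V -> nat := fun v => v \in T.

Definition basis_diff (X Y : {set V}) : {set V} -> K :=
  fun S => (S == X)%:R - (S == Y)%:R.

Lemma sum_sqf_deg T : (\sum_v sqf_deg T v)%N = #|T|.
Proof. by rewrite /sqf_deg -big_mkcond /= -sum1_card; apply: eq_bigr. Qed.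

Lemma sdivides_sqf_deg S T : sdivides S (sqf_deg T) = (S \subset T).
Proof.
apply/forallP/subsetP => H v; last by apply/implyP => /H; rewrite lt0b.
by move=> vS; have := H v; rewrite vS lt0b.
Qed.

Lemma sdivides_mdec_sqf_deg S T i :
  i \in T -> sdivides S (mdec (sqf_deg T) i) = (S \subset T :\ i).
Proof.
move=> iT; rewrite -sdivides_sqf_deg; apply: eq_forallb => v.
by rewrite /mdec /sqf_deg !inE; case: eqP => [->|]; rewrite ?iT.
Qed.

Lemma sum_basis_diff X Y : \sum_S basis_diff X Y S = 0.
Proof.
have sum1 Z : \sum_(S : {set V}) (S == Z)%:R = 1 :> K.
  by rewrite (bigD1 Z) //= eqxx big1 ?addr0 // => S /negbTE ->.
by rewrite sumrB !sum1 subrr.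
Qed.

Lemma syz_comp_basis_diff a X Y :
  X \in gens -> Y \in gens -> sdivides X a -> sdivides Y a ->
  syz_comp gens a (basis_diff X Y).
Proof.
move=> Xg Yg Xa Ya; split; last exact: sum_basis_diff.
move=> S; rewrite /basis_diff.
case: (S =P X) => [->|_]; first by case: eqP; rewrite ?subrr ?eqxx ?Xg.
by case: (S =P Y) => [->|_]; rewrite ?Yg // subrr eqxx.
Qed.

(* c is supported on generators inside T :\ i, and any two of those are
   linked since their union misses i. *)
Lemma syz_sum_link_closed T i c (C : {set {set V}}) :
  (forall X Y, X \in C -> link T X Y -> Y \in C) ->
  i \in T -> syz_comp gens (mdec (sqf_deg T) i) c -> \sum_(S in C) c S = 0.
Proof.
move=> closedC iT [supp sum0].
have linked X Y : c X != 0 -> c Y != 0 -> link T X Y.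
  move=> /supp/andP[Xg] + /supp/andP[Yg]; rewrite !sdivides_mdec_sqf_deg // => XTi YTi.
  rewrite /link Xg Yg (subset_trans XTi (subsetDl _ _)) (subset_trans YTi (subsetDl _ _)) /=.
  apply: contraTneq iT => <-; apply/negP; rewrite in_setU.
  by case/orP => [/(subsetP XTi)|/(subsetP YTi)]; rewrite !inE eqxx.
case: (boolP [exists Z in C, c Z != 0]) => [/exists_inP[Z ZC cZ]|]; last first.
  by rewrite negb_exists_in => /forall_inP c0; apply: big1 => S /c0; rewrite negbK => /eqP.
rewrite -[RHS]sum0 [RHS](bigID (mem C)) /= [X in _ = _ + X]big1 ?addr0 // => S SnC.
by apply/eqP; apply: contraNT SnC => cS; apply: closedC ZC (linked _ _ cZ cS).
Qed.

Lemma decomposable_sum_link_closed T c (C : {set {set V}}) :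
  (forall X Y, X \in C -> link T X Y -> Y \in C) ->
  decomposable (sqf_deg T) c -> \sum_(S in C) c S = 0.
Proof.
move=> closedC [cs [Hcs Hc]]; rewrite (eq_bigr _ (fun S _ => Hc S)) exchange_big.
apply: big1 => i _; have [syz_i zero_i] := Hcs i.
case: (boolP (i \in T)) => iT; first exact: syz_sum_link_closed iT syz_i.
by apply: big1 => S _; apply: zero_i; rewrite /sqf_deg (negbTE iT).
Qed.

Lemma linearly_related_link_connected d T :
  linearly_related_gens K gens d -> #|T| <> d.+1 -> link_connected T.
Proof.
move=> LR hT X Y Xg Yg XT YT; apply/idPn => nXY.
pose C := [set Z | connect (link T) X Z].
have closedC Z W : Z \in C -> link T Z W -> W \in C.
  by rewrite !inE => XZ /connect1; apply: connect_trans.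
have syz : syz_comp gens (sqf_deg T) (basis_diff X Y).
  by apply: syz_comp_basis_diff; rewrite ?sdivides_sqf_deg.
have degT : (\sum_v sqf_deg T v)%N <> d.+1 by rewrite sum_sqf_deg.
have := decomposable_sum_link_closed closedC (LR _ degT _ syz).
rewrite (bigD1 X) ?inE ?connect0 //= big1 => [|S /andP[SC SX]]; last first.
  rewrite /basis_diff (negbTE SX); case: (S =P Y) SC => [->|_]; last by rewrite subrr.
  by rewrite inE (negbTE nXY).
have XY : X != Y by apply: contraNneq nXY => ->; apply: connect0.
by rewrite /basis_diff eqxx (negbTE XY) subr0 addr0 => /eqP; rewrite oner_eq0.
Qed.

Lemma eq_sdivides S a b : a =1 b -> sdivides S a = sdivides S b.
Proof. by move=> eab; apply: eq_forallb => v; rewrite eab. Qed.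

Lemma decomposable_ext a c c' : c =1 c' -> decomposable a c -> decomposable a c'.
Proof. by move=> e [cs [Hcs Hc]]; exists cs; split=> // S; rewrite -e. Qed.

Lemma decomposable0 a : decomposable a (fun=> 0).
Proof.
exists (fun _ _ => 0); split=> [i|S]; last by rewrite big1.
by split=> //; split=> [S|]; rewrite ?eqxx ?big1.
Qed.

Lemma decomposableD a c1 c2 :
  decomposable a c1 -> decomposable a c2 -> decomposable a (fun S => c1 S + c2 S).
Proof.
move=> [cs1 [Hcs1 Hc1]] [cs2 [Hcs2 Hc2]].
exists (fun i S => cs1 i S + cs2 i S); split=> [i|S]; last by rewrite big_split /= Hc1 Hc2.
have [[supp1 sum1] zero1] := Hcs1 i; have [[supp2 sum2] zero2] := Hcs2 i.
split=> [|ai0 S]; last by rewrite zero1 // zero2 // addr0.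
split=> [S|]; last by rewrite big_split /= sum1 sum2 addr0.
case: (cs1 i S =P 0) => [-> | /eqP nz1]; last by move=> _; exact: supp1 nz1.
by rewrite add0r => /supp2.
Qed.

Lemma decomposableZ a x c : decomposable a c -> decomposable a (fun S => x * c S).
Proof.
move=> [cs [Hcs Hc]]; exists (fun i S => x * cs i S); split=> [i|S]; last first.
  by rewrite Hc mulr_sumr.
have [[supp sum0] zero] := Hcs i.
split=> [|ai0 S]; last by rewrite zero // mulr0.
split=> [S|]; last by rewrite -mulr_sumr sum0 mulr0.
by move=> nz; apply: supp; apply: contraNneq nz => ->; rewrite mulr0.
Qed.

Lemma decomposable_sum a (I : Type) (r : seq I) (F : I -> {set V} -> K) :
  (forall j, decomposable a (F j)) -> decomposable a (fun S => \sum_(j <- r) F j S).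
Proof.
move=> HF; elim: r => [|j r IH].
  by apply: decomposable_ext (decomposable0 a) => S; rewrite big_nil.
by apply: decomposable_ext (decomposableD (HF j) IH) => S; rewrite big_cons.
Qed.

Lemma decomposable_mdec a i c :
  (0 < a i)%N -> syz_comp gens (mdec a i) c -> decomposable a c.
Proof.
move=> ai syz; exists (fun j => if j == i then c else fun=> 0); split=> [j|S]; last first.
  by rewrite (bigD1 i) //= eqxx big1 ?addr0 // => j /negbTE ->.
case: (j =P i) => [->|_]; first by split=> // ai0; move: ai; rewrite ai0.
by split=> //; split=> [S|]; rewrite ?eqxx ?big1.
Qed.

Lemma decomposable_link a T X Y :
  a =1 sqf_deg T -> link T X Y -> decomposable a (basis_diff X Y).
Proof.
move=> aT /and5P[Xg XT Yg YT XYT].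
have [i /andP[iT iXY]] : exists i, (i \in T) && (i \notin X :|: Y).
  apply/existsP; apply: contraNT XYT; rewrite negb_exists => /forallP XY.
  rewrite eqEsubset subUset XT YT; apply/subsetP => v vT.
  by have := XY v; rewrite vT negbK.
have mdec_i S : sdivides S (mdec a i) = (S \subset T :\ i).
  rewrite -sdivides_mdec_sqf_deg //; apply: eq_sdivides => v.
  by rewrite /mdec !aT.
apply: (@decomposable_mdec _ i); first by rewrite aT lt0b.
apply: syz_comp_basis_diff; rewrite ?mdec_i ?subsetD1 ?XT ?YT //.
  by apply: contra iXY => iX; rewrite inE iX.
by apply: contra iXY => iY; rewrite inE iY orbT.
Qed.

Lemma decomposable_connect a T X Y :
  a =1 sqf_deg T -> connect (link T) X Y -> decomposable a (basis_diff X Y).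
Proof.
move=> aT /connectP[p]; elim: p X => [|Z p IH] X /= => [_ ->|/andP[XZ Zp] eY].
  by apply: decomposable_ext (decomposable0 a) => S; rewrite /basis_diff subrr.
apply: decomposable_ext (decomposableD (decomposable_link aT XZ) (IH Z Zp eY)) => S.
by rewrite /basis_diff addrA subrK.
Qed.

Lemma tor1_vanishes_gt1 a i : (1 < a i)%N -> tor1_vanishes K gens a.
Proof.
move=> ai c [supp sum0]; apply: (decomposable_mdec (ltnW ai)); split=> // S.
move=> /supp/andP[-> /forallP Sa]; apply/forallP => v; apply/implyP => vS.
by move: (implyP (Sa v) vS); rewrite /mdec; case: (v =P i) => [->|] //; rewrite ltn_predRL.
Qed.

Lemma tor1_vanishes_link_connected a T :
  a =1 sqf_deg T -> link_connected T -> tor1_vanishes K gens a.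
Proof.
move=> aT conn c [supp sum0].
have suppT S : c S != 0 -> (S \in gens) && (S \subset T).
  by move/supp; rewrite (eq_sdivides _ aT) sdivides_sqf_deg.
have [S0 cS0|c0] := pickP (fun S : {set V} => c S != 0); last first.
  by apply: decomposable_ext (decomposable0 a) => S; have /negbFE/eqP := c0 S.
have /andP[S0g S0T] := suppT S0 cS0.
pose F X S := c X * basis_diff X S0 S.
have expand_c : (fun S => \sum_(X <- index_enum _) F X S) =1 c.
  move=> S; rewrite /F /basis_diff; under eq_bigr do rewrite mulrBr.
  rewrite sumrB -mulr_suml sum0 mul0r subr0 (bigD1 S) //= eqxx mulr1.
  by rewrite big1 ?addr0 // => X /negbTE; rewrite eq_sym => ->; rewrite mulr0.
apply: decomposable_ext expand_c (decomposable_sum _ _) => X.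
have [cX0|cX] := eqVneq (c X) 0.
  by apply: decomposable_ext (decomposable0 a) => S; rewrite /F cX0 mul0r.
have /andP[Xg XT] := suppT X cX.
exact/decomposableZ/(decomposable_connect aT)/conn.
Qed.

Lemma link_connected_linearly_related d :
  (forall T, #|T| <> d.+1 -> link_connected T) -> linearly_related_gens K gens d.
Proof.
move=> conn a deg_a.
have [i ai|a_le1] := pickP (fun i => 1 < a i)%N; first exact: tor1_vanishes_gt1 ai.
pose T := [set v | 0 < a v]%N.
have aT : a =1 sqf_deg T.
  by move=> v; have := a_le1 v; rewrite /sqf_deg inE; case: (a v) => [|[]].
apply: (tor1_vanishes_link_connected aT); apply: conn.
by rewrite -sum_sqf_deg -(eq_bigr _ (fun v _ => aT v)).
Qed.

End Syzygies.

Lemma homo_connect (T1 T2 : finType) (f : T1 -> T2) (e1 : rel T1) (e2 : rel T2) :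
  {homo f : x y / e1 x y >-> e2 x y} ->
  {homo f : x y / connect e1 x y >-> connect e2 x y}.
Proof.
move=> hf x y /connectP[p]; elim: p x => [|z p IH] x /= => [_ ->|/andP[xz zp] ey].
  exact: connect0.
exact: connect_trans (connect1 (hf _ _ xz)) (IH z zp ey).
Qed.

Lemma cover_setU1 (T : finType) (P : {set {set T}}) (A : {set T}) :
  cover (A |: P) = A :|: cover P.
Proof. by rewrite /cover bigcup_setU big_set1. Qed.

Section Matchings.
Variables (V : finType) (E : rel V).
Hypothesis E_simple : simple_graph E.
Implicit Types (M N : {set {set V}}) (e f S T X Y : {set V}).

Lemma sqf_gensP k S :
  reflect (exists M, [/\ is_matching E M, #|M| = k & cover M = S]) (S \in sqf_gens E k).
Proof.
rewrite inE; apply: (iffP existsP) => [[M /and3P[mM /eqP kM /eqP cM]]|[M [mM kM cM]]].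
  by exists M.
by exists M; rewrite mM kM cM !eqxx.
Qed.

Lemma edge_of_matching M e : is_matching E M -> e \in M -> is_edge E e.
Proof. by move=> /andP[/forall_inP edgeM _]; apply: edgeM. Qed.

Lemma card_edge e : is_edge E e -> #|e| = 2.
Proof.
case: E_simple => _ irrE /existsP[x /existsP[y /andP[Exy /eqP ->]]].
by rewrite cards2; case: (x =P y) Exy => // ->; rewrite irrE.
Qed.

Lemma card_cover_matching M : is_matching E M -> #|cover M| = (2 * #|M|)%N.
Proof.
move=> /andP[/forall_inP edgeM /eqP <-].
by rewrite (eq_bigr (fun=> 2)) ?sum_nat_const 1?mulnC // => e /edgeM/card_edge.
Qed.

Lemma card_sqf_gens k S : S \in sqf_gens E k -> #|S| = (2 * k)%N.
Proof. by case/sqf_gensP=> M [mM <- <-]; apply: card_cover_matching. Qed.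

Lemma matchingD1 M g : is_matching E M -> is_matching E (M :\ g).
Proof.
move=> /andP[/forall_inP edgeM tM]; rewrite /is_matching trivIsetD // andbT.
by apply/forall_inP => e /setD1P[_ /edgeM].
Qed.

Lemma matchingU1 M f :
  is_matching E M -> is_edge E f -> [disjoint f & cover M] ->
  is_matching E (f |: M) /\ f \notin M.
Proof.
move=> /andP[/forall_inP edgeM tM] fe dis.
have fM : {in M, forall e, [disjoint f & e]}.
  by move=> e eM; move/bigcup_disjointP: dis; apply.
have M0 : set0 \notin M by apply/negP => /edgeM/card_edge; rewrite cards0.
have [tfM fnM] := trivIsetU1 fM tM M0; split=> //.
by rewrite /is_matching tfM andbT; apply/forall_inP => e /setU1P[->|/edgeM].
Qed.

Lemma sqf_gensD1 k M e :
  is_matching E M -> #|M| = k.+1 -> e \in M -> cover (M :\ e) \in sqf_gens E k.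
Proof.
move=> mM kM eM; apply/sqf_gensP; exists (M :\ e); split=> //; first exact: matchingD1.
by apply/eqP; rewrite -eqSS -kM (cardsD1 e M) eM.
Qed.

Lemma sqf_gensU1 k f S :
  is_edge E f -> [disjoint f & S] -> S \in sqf_gens E k -> f :|: S \in sqf_gens E k.+1.
Proof.
move=> fe dis /sqf_gensP[M [mM kM cM]]; rewrite -cM in dis.
have [mfM fM] := matchingU1 mM fe dis.
by apply/sqf_gensP; exists (f |: M); rewrite cardsU1 fM kM cover_setU1 cM.
Qed.

Lemma homo_link_setU_edge k T e :
  is_edge E e -> e \subset T ->
  {homo setU e : X Y / link (sqf_gens E k) (T :\: e) X Y >-> link (sqf_gens E k.+1) T X Y}.
Proof.
move=> ee eT X Y /and5P[Xg XTe Yg YTe XYTe].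
move: XTe YTe; rewrite !subsetD => /andP[XT Xe] /andP[YT Ye].
have lift Z : Z \in sqf_gens E k -> Z \subset T -> [disjoint Z & e] ->
    (e :|: Z \in sqf_gens E k.+1) && (e :|: Z \subset T).
  by move=> Zg ZT Ze; rewrite subUset eT ZT sqf_gensU1 // disjoint_sym.
have /andP[eXg eXT] := lift X Xg XT Xe; have /andP[eYg eYT] := lift Y Yg YT Ye.
rewrite /link eXg eXT eYg eYT /=; apply: contra XYTe => /eqP eXYT; apply/eqP.
rewrite -eXYT setUACA setUid setDUl setDv set0U; apply/esym/setDidPl.
by rewrite disjoints_subset subUset -!disjoints_subset Xe Ye.
Qed.

Lemma cover_setD1K M e : e \in M -> e :|: cover (M :\ e) = cover M.
Proof. by move=> eM; rewrite -cover_setU1 setD1K. Qed.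

Lemma connect_common_edge k T e N1 N2 :
  link_connected (sqf_gens E k) (T :\: e) ->
  is_matching E N1 -> #|N1| = k.+1 -> e \in N1 -> cover N1 \subset T ->
  is_matching E N2 -> #|N2| = k.+1 -> e \in N2 -> cover N2 \subset T ->
  connect (link (sqf_gens E k.+1) T) (cover N1) (cover N2).
Proof.
move=> conn m1 k1 e1 N1T m2 k2 e2 N2T.
have ee := edge_of_matching m1 e1.
have eT : e \subset T := subset_trans (bigcup_sup _ e1) N1T.
have cover_sub N : is_matching E N -> e \in N -> cover N \subset T ->
    cover (N :\ e) \subset T :\: e.
  by move=> /andP[_ tN] eN NT; rewrite coverD1 // setSD.
rewrite -(cover_setD1K e1) -(cover_setD1K e2).
apply: (homo_connect (homo_link_setU_edge ee eT)).
by apply: conn; rewrite ?(sqf_gensD1 m1 k1 e1) ?(sqf_gensD1 m2 k2 e2) ?cover_sub.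
Qed.

Lemma matching_exchange M f v :
  is_matching E M -> M != set0 -> is_edge E f -> v \in f -> v \notin cover M ->
  exists2 g, g \in M & [disjoint f & cover (M :\ g)].
Proof.
move=> /andP[_ tM] M0 /existsP[x /existsP[y /andP[_ /eqP ->]]] vf vM.
have [u ->] : exists u, [set x; y] = [set u; v].
  by case/set2P: vf => ->; [exists y; apply: setUC | exists x].
have disj g : g \in M -> (u \in g) || (u \notin cover M) ->
    [disjoint [set u; v] & cover (M :\ g)].
  move=> gM ug; rewrite coverD1 // disjoints_subset subUset !sub1set !inE (negbTE vM).
  by rewrite andbF andbT negb_and negbK.
have [/bigcupP[g gM ug]|uM] := boolP (u \in cover M).
  by exists g; rewrite ?disj ?ug.
by case/set0Pn: M0 => g gM; exists g; rewrite ?disj ?uM ?orbT.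
Qed.

Lemma matching_swap_edge k M f v :
  (0 < k)%N -> is_matching E M -> #|M| = k.+1 ->
  is_edge E f -> v \in f -> v \notin cover M ->
  exists N, [/\ is_matching E N, #|N| = k.+1, f \in N, cover N \subset f :|: cover M
              & exists2 e, e \in M & e \in N].
Proof.
move=> k_gt0 mM kM fe vf vM.
have [|g gM dg] := matching_exchange mM _ fe vf vM; first by rewrite -card_gt0 kM.
have kMg : #|M :\ g| = k by apply/eqP; rewrite -eqSS -kM (cardsD1 g M) gM.
have [mN fN] := matchingU1 (matchingD1 g mM) fe dg.
have /card_gt0P[e eMg] : (0 < #|M :\ g|)%N by rewrite kMg.
exists (f |: (M :\ g)); split=> //.
- by rewrite cardsU1 fN kMg.
- exact: setU11.
- by rewrite cover_setU1 setUS // coverD1 ?subsetDl //; case/andP: mM.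
- by exists e; [case/setD1P: eMg | apply: setU1r].
Qed.

Lemma link_connected_sqf_gens_succ k :
  (0 < k)%N ->
  (forall T, #|T| <> (2 * k).+1 -> link_connected (sqf_gens E k) T) ->
  forall T, #|T| <> (2 * k.+1).+1 -> link_connected (sqf_gens E k.+1) T.
Proof.
move=> k_gt0 conn T hT A B Ag Bg AT BT.
have [->|nAB] := eqVneq A B; first exact: connect0.
have connTe e : is_edge E e -> e \subset T -> link_connected (sqf_gens E k) (T :\: e).
  move=> ee eT; apply: conn; rewrite cardsD (setIidPr eT) (card_edge ee).
  have T_ge2 : (2 <= #|T|)%N.
    by rewrite (leq_trans _ (subset_leq_card AT)) // (card_sqf_gens Ag) mulnS leq_addr.
  by move=> h; apply: hT; rewrite -(subnK T_ge2) h mulnS add2n addn2.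
have /subsetPn[v vB vA] : ~~ (B \subset A).
  apply: contra nAB => BA.
  by rewrite eq_sym eqEcard BA (card_sqf_gens Ag) (card_sqf_gens Bg) leqnn.
case/sqf_gensP: Ag vA AT => MA [mA kA <-] vA AT.
case/sqf_gensP: Bg vB BT => MB [mB kB <-] /bigcupP[f fMB vf] BT.
have fe := edge_of_matching mB fMB.
have fT : f \subset T := subset_trans (bigcup_sup _ fMB) BT.
have [N [mN kN fN NfA [e eMA eN]]] := matching_swap_edge k_gt0 mA kA fe vf vA.
have NT : cover N \subset T by rewrite (subset_trans NfA) // subUset fT.
have eT : e \subset T := subset_trans (bigcup_sup _ eMA) AT.
apply: (@connect_trans _ _ (cover N)).
  exact: connect_common_edge (connTe e (edge_of_matching mA eMA) eT) mA kA eMA AT mN kN eN NT.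
exact: connect_common_edge (connTe f fe fT) mN kN fN NT mB kB fMB BT.
Qed.

End Matchings.

Theorem theorem3p1 (K : fieldType) (V : finType) (E : rel V) (k : nat) :
  simple_graph E ->
  (1 <= k)%N -> (k < matching_number E)%N ->
  sqf_power_linearly_related K E k ->
  sqf_power_linearly_related K E k.+1.
Proof.
move=> E_simple k_gt0 _ LR.
apply: link_connected_linearly_related.
apply: (link_connected_sqf_gens_succ E_simple k_gt0) => T degT.
exact: linearly_related_link_connected LR degT.
Qed.
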